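(* Let $\sigma^2>0$, $\gamma>0$, and let $n\ge 1$ be an integer. Let $\mathbf{H}'\in\mathbb{C}^{N_R\times M}$ and let $L$ be a positive integer with $L\le \operatorname{rank}(\mathbf{H}')$. Let $\lambda_{H'}(1)\ge\cdots\ge\lambda_{H'}(L)>0$ be the $L$ largest eigenvalues of $\mathbf{H}'^H\mathbf{H}'$, and let $\mathbf{V}^{(1)}\in\mathbb{C}^{M\times L}$ be a matrix whose orthonormal columns are corresponding right singular vectors of $\mathbf{H}'$ (i.e. corresponding unit-norm eigenvectors of $\mathbf{H}'^H\mathbf{H}'$). Consider the problem $$\min_{\mathbf{U}\in\mathbb{C}^{M\times L}} \operatorname{tr}\{\mathbf{U}^H\mathbf{U}\}\quad\text{subject to}\quad \mathbf{U}^H\mathbf{H}'^H\mathbf{H}'\mathbf{U}\ \text{invertible and}\ \sum_{\ell=1}^{L}\sigma^2\Big[\big(\mathbf{U}^H\mathbf{H}'^H\mathbf{H}'\mathbf{U}\big)^{-1}\Big]_{\ell,\ell}\le \frac{\gamma}{n}.$$ Define, for $\ell=1,\dots,L$, $$\lambda_{U}(\ell)=\sqrt{\nu\,\frac{\sigma^2}{\lambda_{H'}(\ell)}},$$ where $\nu>0$ is the (unique) constant such that $\sum_{\ell=1}^{L}\frac{\sigma^2}{\lambda_U(\ell)\,\lambda_{H'}(\ell)}=\frac{\gamma}{n}$, and let $\boldsymbol{\Lambda}_U=\operatorname{diag}(\lambda_U(1),\dots,\lambda_U(L))$. Then for every unitary $\mathbf{S}\in\mathbb{C}^{L\times L}$,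 the matrix $$\mathbf{U}=\mathbf{V}^{(1)}\boldsymbol{\Lambda}_U^{1/2}\mathbf{S}^H$$ is an optimal solution of the problem, and the optimal value equals $\sum_{\ell=1}^{L}\lambda_U(\ell)$. Moreover, $\mathbf{S}$ can be chosen so that every term satisfies $\sigma^2\big[(\mathbf{U}^H\mathbf{H}'^H\mathbf{H}'\mathbf{U})^{-1}\big]_{\ell,\ell}=\epsilon$ for all $\ell=1,\dots,L$, where $\epsilon=\frac{1}{L}\frac{\gamma}{n}$.
   Context: This is the per-subcarrier, per-user power-minimization problem arising in a zero-forcing transceiver design: $\mathbf{H}'$ plays the role of the equivalent channel matrix of a user on a subcarrier, $\mathbf{U}$ is the transmit precoding matrix, $\operatorname{tr}\{\mathbf{U}^H\mathbf{U}\}$ is (proportional to) the transmit power, and the quantities $\sigma^2[(\mathbf{U}^H\mathbf{H}'^H\mathbf{H}'\mathbf{U})^{-1}]_{\ell,\ell}$ are the mean-square errors of the $L$ data streams under the zero-forcing receiver $\mathbf{G}=(\mathbf{U}^H\mathbf{H}'^H\mathbf{H}'\mathbf{U})^{-1}\mathbf{U}^H\mathbf{H}'^H$. $[\mathbf{A}]_{\ell,\ell}$ denotes the $(\ell,\ell)$ entry of $\mathbf{A}$; $^H$ denotes conjugate transpose; $\boldsymbol{\Lambda}_U^{1/2}$ is the diagonal matrix with entries $\sqrt{\lambda_U(\ell)}$. *)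

(* Complex scalars: an arbitrary numClosedFieldType C
   (e.g. algC); "real" quantities are elements of C that are real. *)
From HB Require Import structures.
From mathcomp Require Import all_boot all_order all_algebra.
Set Implicit Arguments. Unset Strict Implicit. Unset Printing Implicit Defensive.
Import Order.TTheory GRing.Theory Num.Theory.
Local Open Scope ring_scope.

Definition herm (C : numClosedFieldType) (m n : nat) (A : 'M[C]_(m, n)) : 'M[C]_(n, m) :=
  (map_mx Num.conj A)^T.

Definition unitary (C : numClosedFieldType) (n : nat) (S : 'M[C]_n) : Prop :=
  herm S *m S = 1%:M.

Definition diagf (C : numClosedFieldType) (n : nat) (d : 'I_n -> C) : 'M[C]_n :=
  diag_mx (\row_i d i).

Definition feasible (C : numClosedFieldType) (NR M L : nat) (sigma2 bound : C)
  (H : 'M[C]_(NR, M)) (U : 'M[C]_(M, L)) : Prop :=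
  let G := herm U *m herm H *m H *m U in
  G \in unitmx /\ \sum_(l < L) sigma2 * (invmx G) l l <= bound.

(* In the eigenbasis [H'^H H' = V D V^H] write [W = V^H U] and [G = W^H D W].  Expanding
   [tr (Z^H Z) >= 0] for [Z = W - t D^(1/2) W G^-1], with [t^2 = nu sigma^2], gives
   [tr (U^H U) >= 2 t tr (D^(1/2) T) - t^2 tr G^-1] where [T = W G^-1 W^H] satisfies
   [T D T = T].  Hence the weights [d k * T k k] lie in [[0, 1]] and sum to [L], so
   [tr (D^(1/2) T)] is at least [\sum_(l < L) d l ^-1/2], the value for [T] supported on the
   [L] largest eigenvalues.  Together with the MSE constraint [sigma^2 tr G^-1 <= gamma / n]
   this bounds [tr (U^H U)] below by [\sum_l lamU l], which [Uopt S] attains.  Equal MSEs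
   need a unitary [S] all of whose entries have modulus [L^-1/2]. *)

From HB Require Import structures.
From mathcomp Require Import all_boot all_order all_algebra.
From mathcomp Require Import ring separable cyclic cyclotomic.
Import Order.TTheory GRing.Theory Num.Theory.
Local Open Scope ring_scope.

Set Implicit Arguments. Unset Strict Implicit. Unset Printing Implicit Defensive.

Section Adjoint.
Variable C : numClosedFieldType.

Lemma hermE m n (A : 'M[C]_(m, n)) i j : herm A i j = (A j i)^*.
Proof. by rewrite /herm !mxE. Qed.

Lemma hermM m n p (A : 'M[C]_(m, n)) (B : 'M[C]_(n, p)) :
  herm (A *m B) = herm B *m herm A.
Proof. by rewrite /herm map_mxM trmx_mul. Qed.

Lemma hermK m n (A : 'M[C]_(m, n)) : herm (herm A) = A.
Proof. by apply/matrixP=> i j; rewrite !hermE conjCK. Qed.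

Lemma hermV n (A : 'M[C]_n) : herm (invmx A) = invmx (herm A).
Proof. by rewrite /herm map_invmx trmx_inv. Qed.

Lemma hermB m n (A B : 'M[C]_(m, n)) : herm (A - B) = herm A - herm B.
Proof. by apply/matrixP=> i j; rewrite !(hermE, mxE) rmorphB. Qed.

Lemma hermZ m n (a : C) (A : 'M[C]_(m, n)) : herm (a *: A) = a^* *: herm A.
Proof. by apply/matrixP=> i j; rewrite !(hermE, mxE) rmorphM. Qed.

Lemma diagfE n (e : 'I_n -> C) i j : diagf e i j = e i *+ (i == j).
Proof. by rewrite /diagf !mxE. Qed.

Lemma eq_diagf n (e e' : 'I_n -> C) : e =1 e' -> diagf e = diagf e'.
Proof. by move=> ee'; apply/matrixP=> i j; rewrite !diagfE ee'. Qed.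

Lemma diagf1 n : diagf (fun _ : 'I_n => 1 : C) = 1%:M.
Proof. by apply/matrixP=> i j; rewrite diagfE !mxE. Qed.

Lemma diagfM n (e e' : 'I_n -> C) :
  diagf e *m diagf e' = diagf (fun i => e i * e' i).
Proof. by rewrite /diagf mulmx_diag; congr diag_mx; apply/rowP=> i; rewrite !mxE. Qed.

Lemma mul_diagf_mxE m n (e : 'I_m -> C) (A : 'M[C]_(m, n)) i j :
  (diagf e *m A) i j = e i * A i j.
Proof. by rewrite /diagf mul_diag_mx !mxE. Qed.

Lemma mul_mx_diagfE m n (A : 'M[C]_(m, n)) (e : 'I_n -> C) i j :
  (A *m diagf e) i j = A i j * e j.
Proof. by rewrite /diagf mul_mx_diag !mxE. Qed.

Lemma herm_diagf_real n (e : 'I_n -> C) :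
  (forall i, e i \is Num.real) -> herm (diagf e) = diagf e.
Proof.
move=> e_real; apply/matrixP=> i j; rewrite hermE !diagfE eq_sym.
by case: eqP => [->|_]; rewrite ?mulr1n ?conj_Creal ?mulr0n ?rmorph0.
Qed.

Lemma mxtrace_diagf_mul n (e : 'I_n -> C) (A : 'M[C]_n) :
  \tr (diagf e *m A) = \sum_i e i * A i i.
Proof.
by apply: eq_bigr => i _; rewrite mul_diagf_mxE.
Qed.

Lemma herm_mul_diag_ge0 m n (A : 'M[C]_(m, n)) i : 0 <= (herm A *m A) i i.
Proof.
by rewrite mxE; apply: sumr_ge0 => j _; rewrite hermE mulrC mul_conjC_ge0.
Qed.

Lemma mxtrace_herm_mul_ge0 m n (A : 'M[C]_(m, n)) : 0 <= \tr (herm A *m A).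
Proof. by apply: sumr_ge0 => i _; apply: herm_mul_diag_ge0. Qed.

Lemma unitary_mulmx_herm n (S : 'M[C]_n) : unitary S -> S *m herm S = 1%:M.
Proof. exact: mulmx1C. Qed.

Lemma mxtrace_herm_mul_unitary m n (V : 'M[C]_m) (A : 'M[C]_(m, n)) :
  unitary V -> \tr (herm (herm V *m A) *m (herm V *m A)) = \tr (herm A *m A).
Proof.
by move=> /unitary_mulmx_herm VV; rewrite hermM hermK !mulmxA -(mulmxA _ V) VV mulmx1.
Qed.

End Adjoint.

Section CompletingSquare.
Variables (C : numClosedFieldType) (m L : nat) (W : 'M[C]_(m, L)) (R : 'M[C]_m) (t : C).
Hypotheses (R_herm : herm R = R) (t_real : t^* = t).
Hypothesis G_unit : herm W *m (R *m R) *m W \in unitmx.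
Local Notation Gi := (invmx (herm W *m (R *m R) *m W)).

Lemma mxtrace_completing_square :
  let Z := W - t *: (R *m W *m Gi) in
  \tr (herm W *m W) =
    \tr (herm Z *m Z) + 2 * t * \tr (R *m (W *m Gi *m herm W)) - t ^+ 2 * \tr Gi.
Proof.
move=> Z.
have Gi_herm : herm Gi = Gi.
  by rewrite hermV !hermM hermK R_herm !mulmxA.
have hZ : herm Z = herm W - t *: (Gi *m herm W *m R).
  by rewrite hermB hermZ t_real !hermM Gi_herm R_herm mulmxA.
rewrite hZ /Z mulmxBl !mulmxBr !raddfB /= -!scalemxAl -!scalemxAr !scalerA !linearZ /=.
set X := \tr (R *m (W *m Gi *m herm W)).
have -> : \tr (herm W *m (R *m W *m Gi)) = X by rewrite /X mxtrace_mulC !mulmxA.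
have -> : \tr (Gi *m herm W *m R *m W) = X.
  by rewrite /X mxtrace_mulC !mulmxA mxtrace_mulC !mulmxA.
have -> : Gi *m herm W *m R *m (R *m W *m Gi) = Gi.
  by rewrite -[RHS]mul1mx -[X in X *m Gi](mulVmx G_unit) !mulmxA.
ring.
Qed.

End CompletingSquare.

Section GramProjection.
Variables (C : numClosedFieldType) (m L : nat) (W : 'M[C]_(m, L)) (d : 'I_m -> C).
Hypotheses (d_ge0 : forall k, 0 <= d k) (G_unit : herm W *m diagf d *m W \in unitmx).
Local Notation Gi := (invmx (herm W *m diagf d *m W)).
Local Notation T := (W *m Gi *m herm W).

Let d_real k : d k \is Num.real. Proof. exact: ger0_real. Qed.

Lemma gram_proj_herm : herm T = T.
Proof.
by rewrite !hermM hermV !hermM hermK (herm_diagf_real d_real) !mulmxA.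
Qed.

(* The [k]-th diagonal entry of [T D T = T], using [T^H = T]. *)
Lemma gram_proj_diagE k : T k k = \sum_j d j * ((T j k)^* * T j k).
Proof.
have TDT : T *m diagf d *m T = T.
  have -> : T *m diagf d *m T = W *m (Gi *m (herm W *m diagf d *m W)) *m Gi *m herm W.
    by rewrite !mulmxA.
  by rewrite mulVmx // mulmx1.
rewrite -{1}TDT mxE; apply: eq_bigr => j _.
by rewrite mul_mx_diagfE -{1}gram_proj_herm hermE mulrCA mulrA.
Qed.

Lemma gram_proj_diag_ge0 k : 0 <= T k k.
Proof.
rewrite gram_proj_diagE; apply: sumr_ge0 => j _.
by rewrite mulr_ge0 // mulrC mul_conjC_ge0.
Qed.

Lemma gram_proj_diag_le1 k : d k * T k k <= 1.
Proof.
have : d k * ((T k k)^* * T k k) <= T k k.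
  rewrite [leRHS]gram_proj_diagE (bigD1 k) //= lerDl; apply: sumr_ge0 => j _.
  by rewrite mulr_ge0 // mulrC mul_conjC_ge0.
rewrite conj_Creal ?ger0_real ?gram_proj_diag_ge0 //.
have [->|Tk0] := eqVneq (T k k) 0; first by rewrite !mulr0 => _; apply: ler01.
have Tk_gt0 : 0 < T k k by rewrite lt_def Tk0 gram_proj_diag_ge0.
by rewrite mulrA -{3}(mul1r (T k k)) ler_pM2r.
Qed.

Lemma gram_proj_diag_sum : \sum_k d k * T k k = L%:R.
Proof.
rewrite -mxtrace_diagf_mul !mulmxA mxtrace_mulC !mulmxA mulmxV //.
by rewrite mxtrace1.
Qed.

End GramProjection.

Lemma sum_ord_lt_natr (R : nzSemiRingType) m L :
  (L <= m)%N -> \sum_(k < m) ((k < L)%N%:R : R) = L%:R.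
Proof.
move=> leLm; rewrite (eq_bigr (fun k : 'I_m => if (k < L)%N then 1 else 0)).
  by rewrite -big_mkcond /= (big_ord_narrow leLm) sumr_const card_ord.
by move=> k _; case: ifP.
Qed.

(* With weights [x k := s k ^+ 2 * tau k] in [[0, 1]] summing to [L], the sum
   [\sum_k x k / s k] is smallest when the weight sits on the [L] largest [s k]. *)
Lemma sum_inv_le_weighted (R : numFieldType) m L (s tau : 'I_m -> R) (r : R) :
  (L <= m)%N -> 0 < r -> (forall k, 0 <= s k) ->
  (forall k : 'I_m, (k < L)%N -> r <= s k) ->
  (forall k : 'I_m, (L <= k)%N -> s k <= r) ->
  (forall k, 0 <= tau k) -> (forall k, s k ^+ 2 * tau k <= 1) ->
  \sum_k s k ^+ 2 * tau k = L%:R ->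
  \sum_(k < m | (k < L)%N) (s k)^-1 <= \sum_k s k * tau k.
Proof.
move=> leLm r_gt0 s_ge0 s_head s_tail tau_ge0 x_le1 x_sum.
have term k : (s k ^+ 2 * tau k - (k < L)%N%:R) / r <=
    s k * tau k - (if (k < L)%N then (s k)^-1 else 0).
  rewrite -subr_ge0; case: ltnP => kL.
    have sk_gt0 : 0 < s k by apply: lt_le_trans (s_head k kL).
    have -> : s k * tau k - (s k)^-1 - (s k ^+ 2 * tau k - 1%:R) / r =
        (1 - s k ^+ 2 * tau k) * (s k - r) / (r * s k).
      by field; rewrite !gt_eqF.
    by rewrite divr_ge0 ?mulr_ge0 ?subr_ge0 ?x_le1 ?s_head ?s_ge0 ?(ltW r_gt0).
  have -> : s k * tau k - 0 - (s k ^+ 2 * tau k - 0%:R) / r =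
      s k * tau k * (r - s k) / r.
    by field; rewrite gt_eqF.
  by rewrite divr_ge0 ?mulr_ge0 ?subr_ge0 ?s_tail ?s_ge0 ?tau_ge0 ?(ltW r_gt0).
rewrite big_mkcond /= -subr_ge0 -sumrB; apply: le_trans (ler_sum _ (fun k _ => term k)).
by rewrite -mulr_suml sumrB x_sum sum_ord_lt_natr // subrr mul0r.
Qed.

Section TraceLowerBound.
Variables (C : numClosedFieldType) (m L : nat) (W : 'M[C]_(m, L)) (d : 'I_m -> C).
Hypotheses (L_gt0 : (0 < L)%N) (leLm : (L <= m)%N).
Hypotheses (d_ge0 : forall k, 0 <= d k) (d_noninc : forall i j : 'I_m, (i <= j)%N -> d j <= d i).
Hypothesis d_head_gt0 : forall k : 'I_m, (k < L)%N -> 0 < d k.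
Hypothesis G_unit : herm W *m diagf d *m W \in unitmx.

Lemma mxtrace_gram_lower_bound (t : C) : 0 <= t ->
  2 * t * \sum_(k < m | (k < L)%N) (sqrtC (d k))^-1
    - t ^+ 2 * \tr (invmx (herm W *m diagf d *m W)) <= \tr (herm W *m W).
Proof.
move=> t_ge0; set R := diagf (fun k => sqrtC (d k)).
have RR : R *m R = diagf d.
  by rewrite diagfM; apply: eq_diagf => k; rewrite -expr2 sqrtCK.
have R_herm : herm R = R by rewrite herm_diagf_real // => k; apply: sqrtC_real.
have RR_unit : herm W *m (R *m R) *m W \in unitmx by rewrite RR.
have t_real : t^* = t by rewrite conj_Creal ?ger0_real.
rewrite (mxtrace_completing_square R_herm t_real RR_unit) /= RR.
rewrite mxtrace_diagf_mul lerD2r -[leLHS]add0r.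
apply: lerD; first exact: mxtrace_herm_mul_ge0.
have k0_lt : (L.-1 < m)%N by rewrite prednK.
rewrite ler_wpM2l ?mulr_ge0 ?ler0n //.
apply: (sum_inv_le_weighted (r := sqrtC (d (Ordinal k0_lt)))) => // [||k|k|k|k|].
- by rewrite sqrtC_gt0 d_head_gt0 //= prednK.
- by move=> k; rewrite sqrtC_ge0.
- move=> kL; rewrite ler_sqrtC ?nnegrE ?d_ge0 //.
  by apply: d_noninc; rewrite /= -ltnS prednK.
- move=> kL; rewrite ler_sqrtC ?nnegrE ?d_ge0 //.
  by apply: d_noninc; apply: leq_trans (leq_pred L) kL.
- exact: gram_proj_diag_ge0.
- by rewrite sqrtCK; apply: gram_proj_diag_le1.
- by under eq_bigr do rewrite sqrtCK; apply: gram_proj_diag_sum.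
Qed.
End TraceLowerBound.

Section UnitaryConjugation.
Variables (C : numClosedFieldType) (n : nat) (S : 'M[C]_n).
Hypothesis S_unitary : unitary S.

Lemma unitary_conj_diagfE (e : 'I_n -> C) i :
  (S *m diagf e *m herm S) i i = \sum_j e j * (S i j * (S i j)^*).
Proof. by rewrite mxE; apply: eq_bigr => j _; rewrite mul_mx_diagfE hermE mulrAC mulrC. Qed.

Lemma mxtrace_unitary_conj (e : 'I_n -> C) : \tr (S *m diagf e *m herm S) = \sum_j e j.
Proof.
rewrite mxtrace_mulC mulmxA S_unitary mul1mx.
by apply: eq_bigr => j _; rewrite diagfE eqxx mulr1n.
Qed.

Lemma unitary_conj_diagf_unit (e : 'I_n -> C) : (forall i, e i != 0) ->
  S *m diagf e *m herm S \in unitmx /\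
  invmx (S *m diagf e *m herm S) = S *m diagf (fun i => (e i)^-1) *m herm S.
Proof.
move=> e_neq0.
have inv1 : (S *m diagf e *m herm S) *m (S *m diagf (fun i => (e i)^-1) *m herm S) = 1%:M.
  rewrite !mulmxA -(mulmxA _ (herm S) S) S_unitary mulmx1 -(mulmxA _ (diagf e)) diagfM.
  rewrite (@eq_diagf _ _ _ (fun _ => 1)) => [|i]; last by rewrite mulfV.
  by rewrite diagf1 mulmx1 unitary_mulmx_herm.
have [G_unit _] := mulmx1_unit inv1; split => //.
by rewrite -[RHS]mul1mx -(mulVmx G_unit) -(mulmxA (invmx _)) inv1 mulmx1.
Qed.

End UnitaryConjugation.

Section DFT.
Variable C : numClosedFieldType.

Lemma prim_root_exists n : (0 < n)%N -> exists z : C, n.-primitive_root z.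
Proof.
move=> n_gt0; have [r Dp] := closed_field_poly_normal ('X^n - 1 : {poly C}).
rewrite (monicP _) ?monicXnsubC // scale1r in Dp.
have rn1 : all n.-unity_root r by apply/allP=> z; rewrite -root_prod_XsubC -Dp.
have sz_r : (n < (size r).+1)%N by rewrite -(size_prod_XsubC r id) -Dp size_XnsubC.
have [|z] := hasP (has_prim_root n_gt0 rn1 _ sz_r); last by exists z.
by rewrite -separable_prod_XsubC -Dp separable_Xn_sub_1 // pnatr_eq0 -lt0n.
Qed.

(* The witness is the DFT matrix [L^-1/2 (w ^+ (i * j))], [w] a primitive [L]-th root of 1. *)
Lemma unitary_const_modulus_exists L : (0 < L)%N ->
  exists S : 'M[C]_L, unitary S /\ forall i j, S i j * (S i j)^* = L%:R^-1.
Proof.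
move=> L_gt0; have [w w_prim] := prim_root_exists L_gt0.
have wL : w ^+ L = 1 := prim_expr_order w_prim.
have w_neq0 : w != 0 by rewrite (prim_root_eq0 w_prim) -lt0n.
have w_conj : w^* = w^-1.
  have w_norm : `|w| = 1 by apply/eqP; rewrite -(pexpr_eq1 L_gt0) // -normrX wL normr1.
  by apply: (mulIf w_neq0); rewrite mulVf // mulrC -normCK w_norm expr1n.
set c := (sqrtC (L%:R : C))^-1.
have c_conj : c^* = c by rewrite conj_Creal // realV sqrtC_real ?ler0n.
have cc : c * c = L%:R^-1 by rewrite -invfM -expr2 sqrtCK.
pose S : 'M[C]_L := \matrix_(i, j) (c * w ^+ (i * j)).
have SS (i j k : 'I_L) : (S k i)^* * S k j = c * c * ((w^-1 ^+ i * w ^+ j) ^+ k).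
  rewrite !mxE rmorphM rmorphXn /= c_conj w_conj exprMn -!exprM.
  by rewrite mulnC [(k * j)%N]mulnC mulrACA.
exists S; split => [|i j]; last by rewrite mulrC SS -exprMn mulVf // !expr1n mulr1 cc.
apply/matrixP=> i j; rewrite !mxE; under eq_bigr => k _ do rewrite hermE SS.
rewrite -mulr_sumr cc; have [<-|neq_ij] := eqVneq i j.
  rewrite -exprMn mulVf // (eq_bigr (fun _ => 1)) => [|k _]; last by rewrite !expr1n.
  by rewrite sumr_const card_ord mulVf ?pnatr_eq0 -?lt0n.
have z_neq1 : w^-1 ^+ i * w ^+ j != 1.
  apply: contra neq_ij => /eqP z1; apply/eqP/val_inj/eqP.
  have : w ^+ i * (w^-1 ^+ i * w ^+ j) = w ^+ i by rewrite z1 mulr1.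
  rewrite mulrA -exprMn mulfV // expr1n mul1r => /eqP.
  by rewrite (eq_prim_root_expr w_prim) !modn_small // eq_sym.
have zL : (w^-1 ^+ i * w ^+ j) ^+ L = 1.
  by rewrite exprMn -!exprM mulnC [(j * L)%N]mulnC !exprM exprVn wL invr1 !expr1n mulr1.
have := subrX1 (w^-1 ^+ i * w ^+ j) L; rewrite zL subrr => /esym/eqP.
by rewrite mulf_eq0 subr_eq0 (negbTE z_neq1) /= => /eqP ->; rewrite mulr0.
Qed.

End DFT.

Section Embedding.
Variables (C : numClosedFieldType) (m L : nat) (leLm : (L <= m)%N).

Definition ord_embed_mx : 'M[C]_(m, L) := \matrix_(k, l) (k == widen_ord leLm l)%:R.

Lemma mul_ord_embed_mxE p (A : 'M[C]_(p, m)) i l :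
  (A *m ord_embed_mx) i l = A i (widen_ord leLm l).
Proof.
rewrite !mxE (bigD1 (widen_ord leLm l)) //= !mxE eqxx mulr1.
by rewrite big1 ?addr0 // => k /negbTE k_neq; rewrite mxE k_neq mulr0.
Qed.

Lemma ord_embed_mx_gram (e : 'I_m -> C) :
  herm ord_embed_mx *m diagf e *m ord_embed_mx = diagf (fun l => e (widen_ord leLm l)).
Proof.
apply/matrixP=> l l'; rewrite -mulmxA mxE diagfE (bigD1 (widen_ord leLm l)) //=.
rewrite big1 ?addr0 => [|k /negbTE k_neq]; last by rewrite hermE mxE k_neq conjC0 mul0r.
rewrite hermE mul_diagf_mxE !mxE eqxx conjC1 mul1r.
have widen_eq : (widen_ord leLm l == widen_ord leLm l') = (l == l').
  by apply/eqP/eqP => [/(congr1 val) /= /val_inj|->].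
by rewrite widen_eq mulr_natr.
Qed.

Lemma ord_embed_mx_unitary_gram : herm ord_embed_mx *m ord_embed_mx = 1%:M.
Proof.
by rewrite -[herm _]mulmx1 -(diagf1 C m) ord_embed_mx_gram diagf1.
Qed.

End Embedding.

Section ZeroForcingPrecoder.
Variables (C : numClosedFieldType) (NR M L : nat) (sigma2 nu bound : C).
Variables (H : 'M[C]_(NR, M)) (lamH : 'I_L -> C) (V1 : 'M[C]_(M, L)).
Variables (V : 'M[C]_M) (d : 'I_M -> C).
Hypotheses (sigma2_gt0 : 0 < sigma2) (nu_gt0 : 0 < nu).
Hypotheses (L_gt0 : (0 < L)%N) (leLM : (L <= M)%N).
Hypotheses (V_unitary : unitary V) (HH_eigen : herm H *m H = V *m diagf d *m herm V).
Hypothesis d_noninc : forall i j : 'I_M, (i <= j)%N -> d j <= d i.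
Hypothesis lamH_gt0 : forall l, 0 < lamH l.
Hypothesis lamH_d : forall l, lamH l = d (widen_ord leLM l).
Hypothesis V1_col : forall l, col l V1 = col (widen_ord leLM l) V.

Definition lamU l := sqrtC (nu * (sigma2 / lamH l)).
Definition Uopt (S : 'M[C]_L) := V1 *m diagf (fun l => sqrtC (lamU l)) *m herm S.

Hypothesis mse_sum : \sum_l sigma2 / (lamU l * lamH l) = bound.

Local Notation E := (ord_embed_mx C leLM).
Local Notation Q := (diagf (fun l => sqrtC (lamU l))).
Local Notation t := (sqrtC (nu * sigma2)).

Lemma d_ge0 k : 0 <= d k.
Proof.
have : herm (H *m V) *m (H *m V) = diagf d.
  rewrite hermM -mulmxA (mulmxA (herm H)) HH_eigen !mulmxA V_unitary mul1mx.
  by rewrite -mulmxA V_unitary mulmx1.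
by move/matrixP/(_ k k); rewrite diagfE eqxx mulr1n => <-; apply: herm_mul_diag_ge0.
Qed.

Lemma d_head_gt0 (k : 'I_M) : (k < L)%N -> 0 < d k.
Proof.
move=> kL; have := lamH_gt0 (Ordinal kL).
by rewrite lamH_d; congr (0 < d _); apply: val_inj.
Qed.

Lemma gram_eigen (U : 'M[C]_(M, L)) :
  herm U *m herm H *m H *m U = herm (herm V *m U) *m diagf d *m (herm V *m U).
Proof. by rewrite -(mulmxA (herm U)) HH_eigen hermM hermK !mulmxA. Qed.

Lemma V1E : V1 = V *m E.
Proof.
apply/matrixP=> i l; rewrite mul_ord_embed_mxE.
by move/colP/(_ i): (V1_col l); rewrite !mxE.
Qed.

Lemma t_gt0 : 0 < t.
Proof. by rewrite sqrtC_gt0 mulr_gt0. Qed.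

Lemma lamUE l : lamU l = t / sqrtC (lamH l).
Proof.
have sqrt_lamH_gt0 : 0 < sqrtC (lamH l) by rewrite sqrtC_gt0.
rewrite -[RHS]sqrCK ?divr_ge0 ?ltW ?t_gt0 //.
by rewrite expr_div_n !sqrtCK /lamU mulrA.
Qed.

Lemma lamU_gt0 l : 0 < lamU l.
Proof. by rewrite lamUE divr_gt0 ?t_gt0 ?sqrtC_gt0. Qed.

Lemma sum_lamU : \sum_l lamU l = nu * bound.
Proof.
rewrite -mse_sum mulr_sumr; apply: eq_bigr => l _.
have lamU2 : lamU l ^+ 2 = nu * (sigma2 / lamH l) by rewrite sqrtCK.
have lamU_neq0 : lamU l != 0 by rewrite gt_eqF ?lamU_gt0.
have lamH_neq0 : lamH l != 0 by rewrite gt_eqF.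
by apply: (mulfI lamU_neq0); rewrite -expr2 lamU2; field; rewrite lamU_neq0 lamH_neq0.
Qed.

Lemma Q_herm : herm Q = Q.
Proof. by rewrite herm_diagf_real // => l; rewrite sqrtC_real ?ltW ?lamU_gt0. Qed.

Lemma herm_V_Uopt S : herm V *m Uopt S = E *m Q *m herm S.
Proof. by rewrite /Uopt V1E !mulmxA V_unitary mul1mx. Qed.

Lemma gram_Uopt S :
  herm (Uopt S) *m herm H *m H *m Uopt S = S *m diagf (fun l => lamU l * lamH l) *m herm S.
Proof.
rewrite gram_eigen herm_V_Uopt !hermM hermK Q_herm.
have -> : S *m (Q *m herm E) *m diagf d *m (E *m Q *m herm S) =
    S *m (Q *m (herm E *m diagf d *m E) *m Q) *m herm S by rewrite !mulmxA.
rewrite ord_embed_mx_gram diagfM diagfM; congr (_ *m _ *m _); apply: eq_diagf => l.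
by rewrite -lamH_d mulrAC -expr2 sqrtCK.
Qed.

Lemma mxtrace_Uopt S : unitary S -> \tr (herm (Uopt S) *m Uopt S) = \sum_l lamU l.
Proof.
move=> S_unitary; rewrite -(mxtrace_herm_mul_unitary _ V_unitary) herm_V_Uopt.
rewrite !hermM hermK Q_herm.
have -> : S *m (Q *m herm E) *m (E *m Q *m herm S) =
    S *m (Q *m (herm E *m E) *m Q) *m herm S by rewrite !mulmxA.
rewrite ord_embed_mx_unitary_gram mulmx1 diagfM mxtrace_unitary_conj //.
by apply: eq_bigr => l _; rewrite -expr2 sqrtCK.
Qed.

Lemma gram_Uopt_inv S : unitary S ->
  let G := herm (Uopt S) *m herm H *m H *m Uopt S in
  G \in unitmx /\ invmx G = S *m diagf (fun l => (lamU l * lamH l)^-1) *m herm S.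
Proof.
move=> S_unitary /=; rewrite gram_Uopt; apply: unitary_conj_diagf_unit => // l.
by rewrite mulf_neq0 ?gt_eqF ?lamU_gt0.
Qed.

Lemma Uopt_feasible S : unitary S -> feasible sigma2 bound H (Uopt S).
Proof.
move=> S_unitary; have [G_unit G_inv] := gram_Uopt_inv S_unitary.
split => //; rewrite G_inv -mulr_sumr.
have -> : \sum_l (S *m diagf (fun l => (lamU l * lamH l)^-1) *m herm S) l l =
    \tr (S *m diagf (fun l => (lamU l * lamH l)^-1) *m herm S) by [].
by rewrite mxtrace_unitary_conj // mulr_sumr -mse_sum.
Qed.

Lemma mxtrace_feasible_ge (U : 'M[C]_(M, L)) :
  feasible sigma2 bound H U -> \sum_l lamU l <= \tr (herm U *m U).
Proof.
rewrite /feasible gram_eigen -(mxtrace_herm_mul_unitary U V_unitary).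
set W := herm V *m U; move=> [G_unit mse_le].
apply: le_trans (mxtrace_gram_lower_bound L_gt0 leLM d_ge0 d_noninc d_head_gt0 G_unit
  (ltW t_gt0)).
have head_sum : \sum_(k < M | (k < L)%N) (sqrtC (d k))^-1 = (\sum_l lamU l) / t.
  rewrite (big_ord_narrow_cond (P := predT)) /= mulr_suml.
  apply: eq_bigr => l _; rewrite -lamH_d lamUE; field.
  by rewrite !gt_eqF ?t_gt0 ?sqrtC_gt0.
have quad_le : t ^+ 2 * \tr (invmx (herm W *m diagf d *m W)) <= \sum_l lamU l.
  by rewrite sqrtCK sum_lamU -mulrA ler_pM2l // /mxtrace mulr_sumr.
rewrite head_sum; set A := \sum_l lamU l.
have -> : 2 * t * (A / t) = A + A by field; rewrite gt_eqF ?t_gt0.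
by rewrite -addrA lerDl subr_ge0.
Qed.

Lemma Uopt_equal_mse : exists S : 'M[C]_L, unitary S /\
  forall l, sigma2 * (invmx (herm (Uopt S) *m herm H *m H *m Uopt S)) l l = L%:R^-1 * bound.
Proof.
have [S [S_unitary S_flat]] := unitary_const_modulus_exists C L_gt0.
exists S; split => // l; have [_ ->] := gram_Uopt_inv S_unitary.
rewrite unitary_conj_diagfE // (eq_bigr (fun j => (lamU j * lamH j)^-1 * L%:R^-1)).
  by rewrite -mulr_suml -mse_sum mulrA mulrC mulr_sumr.
by move=> j _; rewrite S_flat.
Qed.

End ZeroForcingPrecoder.

Unset Implicit Arguments. Set Strict Implicit. Set Printing Implicit Defensive.

Theorem proposition1 (C : numClosedFieldType) (NR M L n : nat)
  (sigma2 gamma : C) (H : 'M[C]_(NR, M))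
  (lamH : 'I_L -> C) (V1 : 'M[C]_(M, L)) (nu : C) :
  0 < sigma2 -> 0 < gamma -> (1 <= n)%N ->
  (0 < L)%N -> (L <= \rank H)%N ->
  (forall l1 l2 : 'I_L, (l1 <= l2)%N -> lamH l2 <= lamH l1) ->
  (forall l : 'I_L, 0 < lamH l) ->
  (exists (V : 'M[C]_M) (d : 'I_M -> C),
      unitary V /\
      herm H *m H = V *m diagf d *m herm V /\
      (forall i j : 'I_M, (i <= j)%N -> d j <= d i) /\
      (forall (l : 'I_L) (k : 'I_M), (k = l :> nat) ->
          lamH l = d k /\ col l V1 = col k V)) ->
  0 < nu ->
  (let lamU := fun l : 'I_L => sqrtC (nu * (sigma2 / lamH l)) in
   \sum_(l < L) sigma2 / (lamU l * lamH l) = gamma / n%:R) ->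
  let lamU := fun l : 'I_L => sqrtC (nu * (sigma2 / lamH l)) in
  let Uopt := fun S : 'M[C]_L => V1 *m diagf (fun l => sqrtC (lamU l)) *m herm S in
  (forall S : 'M[C]_L, unitary S ->
     feasible sigma2 (gamma / n%:R) H (Uopt S) /\
     (forall U : 'M[C]_(M, L), feasible sigma2 (gamma / n%:R) H U ->
        \tr (herm (Uopt S) *m Uopt S) <= \tr (herm U *m U)) /\
     \tr (herm (Uopt S) *m Uopt S) = \sum_(l < L) lamU l) /\
  (exists S : 'M[C]_L, unitary S /\
     forall l : 'I_L,
       sigma2 * (invmx (herm (Uopt S) *m herm H *m H *m Uopt S)) l l
         = (L%:R)^-1 * (gamma / n%:R)).
Proof.
move=> sigma2_gt0 _ _ L_gt0 le_L_rank _ lamH_gt0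
  [V [d [V_unitary [HH_eigen [d_noninc V1_eigen]]]]] nu_gt0 mse_sum lamU Uopt.
have leLM : (L <= M)%N := leq_trans le_L_rank (rank_leq_col H).
have lamH_d l := (V1_eigen l (widen_ord leLM l) erefl).1.
have V1_col l := (V1_eigen l (widen_ord leLM l) erefl).2.
split=> [S S_unitary|].
  have trace_Uopt := mxtrace_Uopt sigma2_gt0 nu_gt0 V_unitary lamH_gt0 V1_col S_unitary.
  split; first exact: (Uopt_feasible sigma2_gt0 nu_gt0 V_unitary HH_eigen lamH_gt0
    lamH_d V1_col mse_sum S_unitary).
  split=> // U U_feasible; rewrite trace_Uopt.
  exact: (mxtrace_feasible_ge sigma2_gt0 nu_gt0 L_gt0 V_unitary HH_eigen d_noninc
    lamH_gt0 lamH_d mse_sum U_feasible).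
exact: (Uopt_equal_mse sigma2_gt0 nu_gt0 L_gt0 V_unitary HH_eigen lamH_gt0 lamH_d
  V1_col mse_sum).
Qed.
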